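(* Let $G$ be a factor-critical equimatchable graph. If $G$ is edge-stable, then $\mathrm{diam}(G)\le 2$.
   Context: All graphs are finite and simple. A graph is equimatchable if all its maximal matchings have the same cardinality; an equimatchable graph $G$ is edge-stable if $G\setminus e$ (delete edge $e$, keep vertices) is equimatchable for every $e\in E(G)$. A graph $G$ is factor-critical if $G-v$ has a perfect matching for every $v\in V(G)$. $\mathrm{diam}(G)=\max\{d(u,v):u,v\in V(G)\}$, where $d(u,v)$ is the length of a shortest $u$–$v$ path. *)

From mathcomp Require Import all_boot.
Set Implicit Arguments. Unset Strict Implicit. Unset Printing Implicit Defensive.

Definition simple_graph (T : finType) (g : rel T) : Prop :=
  symmetric g /\ irreflexive g.

Definition edges (T : finType) (g : rel T) : {set {set T}} :=
  [set e : {set T} | [exists x, exists y, g x y && (e == [set x; y])]].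

Definition matching (T : finType) (g : rel T) (M : {set {set T}}) : Prop :=
  M \subset edges g /\
  (forall e f, e \in M -> f \in M -> e != f -> [disjoint e & f]).

Definition maximal_matching (T : finType) (g : rel T) (M : {set {set T}}) : Prop :=
  matching g M /\
  (forall M' : {set {set T}}, matching g M' -> M \subset M' -> M' = M).

Definition equimatchable (T : finType) (g : rel T) : Prop :=
  forall M1 M2, maximal_matching g M1 -> maximal_matching g M2 -> #|M1| = #|M2|.

Definition del_edge (T : finType) (g : rel T) (u v : T) : rel T :=
  fun x y => g x y && ~~ (((x == u) && (y == v)) || ((x == v) && (y == u))).

Definition edge_stable (T : finType) (g : rel T) : Prop :=
  equimatchable g /\
  forall u v, g u v -> equimatchable (del_edge g u v).

Definition del_vertex (T : finType) (g : rel T) (w : T) : rel T :=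
  fun x y => [&& g x y, x != w & y != w].

Definition perfect_matching_except (T : finType) (g : rel T) (w : T)
  (M : {set {set T}}) : Prop :=
  matching (del_vertex g w) M /\
  (forall x, x != w -> exists2 e, e \in M & x \in e).

Definition factor_critical (T : finType) (g : rel T) : Prop :=
  forall w, exists M, perfect_matching_except g w M.

Definition dist_le (T : finType) (g : rel T) (k : nat) (u v : T) : Prop :=
  exists p : seq T, [/\ path g u p, last u p = v & size p <= k].

Definition diam_le (T : finType) (g : rel T) (k : nat) : Prop :=
  forall u v, dist_le g k u v.

From mathcomp Require Import all_boot.
Set Implicit Arguments. Unset Strict Implicit. Unset Printing Implicit Defensive.

(* Suppose d(u, v) >= 3. Let M_u and M_v be perfect matchings of G - u and G - v,
   and let vw be the edge of M_u at v. Both are maximal in G, so |M_u| = |M_v|.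
   In G \ vw, M_v is still maximal, and so is M_u - vw: it leaves only u, v, w
   uncovered, and these are pairwise non-adjacent there because u has no
   neighbour among v, w. Edge-stability gives |M_u| - 1 = |M_v|, a contradiction. *)

Section Matchings.
Variable T : finType.
Implicit Types (g h : rel T) (M : {set {set T}}).

Lemma edgesP g f : reflect (exists x y, g x y /\ f = [set x; y]) (f \in edges g).
Proof.
rewrite inE; apply: (iffP existsP) => [[x /existsP [y /andP [gxy /eqP ->]]]|].
  by exists x, y.
by case=> x [y [gxy ->]]; exists x; apply/existsP; exists y; rewrite gxy eqxx.
Qed.

Lemma edges_sub g h : subrel g h -> edges g \subset edges h.
Proof.
move=> sgh; apply/subsetP => f /edgesP [x [y [gxy ->]]].
by apply/edgesP; exists x, y; split; first exact: sgh.
Qed.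

Lemma matching_sub g h M : subrel g h -> matching g M -> matching h M.
Proof. by move=> sgh [sMg disM]; split=> //; exact: subset_trans sMg (edges_sub sgh). Qed.

Lemma maximal_matching_cover g M (S : {set T}) :
  matching g M ->
  (forall z, z \notin S -> exists2 e, e \in M & z \in e) ->
  (forall x y, x \in S -> y \in S -> ~~ g x y) ->
  maximal_matching g M.
Proof.
move=> mM covM indS; split=> // M' [sM'g disM'] sMM'.
apply/eqP; rewrite eqEsubset sMM' andbT; apply/subsetP => f fM'.
apply/negPn/negP => fM.
have [x [y [gxy def_f]]] := edgesP _ _ (subsetP sM'g f fM').
have fS z : z \in f -> z \in S.
  move=> zf; apply/negPn/negP => /covM [e eM ze].
  have neq_ef : e != f by apply: contraNneq fM => <-.
  by rewrite (disjointFr (disM' e f (subsetP sMM' e eM) fM' neq_ef) ze) in zf.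
by have := indS x y (fS x _) (fS y _); rewrite gxy def_f !inE !eqxx ?orbT => /(_ isT isT).
Qed.

Lemma del_vertex_sub g w : subrel (del_vertex g w) g.
Proof. by move=> x y /and3P []. Qed.

Lemma perfect_matching_except_maximal g h w M :
  irreflexive h -> subrel (del_vertex g w) h ->
  perfect_matching_except g w M -> maximal_matching h M.
Proof.
move=> hirr sgh [mM covM]; apply: (maximal_matching_cover (S := [set w])).
- exact: matching_sub sgh mM.
- by move=> z; rewrite inE => /covM.
- by move=> x y; rewrite !inE => /eqP -> /eqP ->; rewrite hirr.
Qed.

Lemma matching_del_edge g M v w :
  matching g M -> matching (del_edge g v w) (M :\ [set v; w]).
Proof.
move=> [sMg disM]; split=> [|e f]; last first.
  by rewrite !inE => /andP [_ eM] /andP [_ fM]; exact: disM.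
apply/subsetP => f; rewrite in_setD1 => /andP [fvw fM].
have /edgesP [x [y [gxy def_f]]] := subsetP sMg f fM.
apply/edgesP; exists x, y; split=> //; rewrite /del_edge gxy /=.
apply: contra fvw; rewrite def_f => /orP [] /andP [/eqP -> /eqP ->] //.
by rewrite setUC.
Qed.

Section SimpleGraph.
Variable g : rel T.
Hypotheses (gsym : symmetric g) (girr : irreflexive g).

Lemma perfect_matching_except_partner u v M :
  perfect_matching_except g u M -> v != u ->
  exists2 w, g v w & [set v; w] \in M.
Proof.
move=> [[sMg _] covM] /covM [e eM ve].
have /edgesP [a [b [/and3P [gab _ _] def_e]]] := subsetP sMg e eM.
move: ve; rewrite def_e !inE => /orP [] /eqP ->; first by exists b; rewrite -?def_e.
by exists a; [rewrite gsym | rewrite setUC -def_e].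
Qed.

Lemma maximal_matching_del_matched_edge u v w M :
  perfect_matching_except g u M -> [set v; w] \in M -> ~~ g u v -> ~~ g u w ->
  maximal_matching (del_edge g v w) (M :\ [set v; w]).
Proof.
move=> [mM covM] vwM nguv nguw.
apply: (maximal_matching_cover (S := u |: [set v; w])).
- exact/matching_del_edge/(matching_sub (@del_vertex_sub g u)).
- move=> z; rewrite !inE !negb_or => /and3P [zu zv zw].
  have [e eM ze] := covM z zu.
  exists e => //; rewrite !inE eM andbT.
  by apply: contraTneq ze => ->; rewrite !inE negb_or zv.
have hsym : symmetric (del_edge g v w).
  by move=> x y; rewrite /del_edge gsym orbC (andbC (x == w)) (andbC (x == v)).
have nhu y : y \in u |: [set v; w] -> ~~ del_edge g v w u y.
  by case/setU1P => [->|/set2P [] ->]; rewrite /del_edge ?girr ?(negbTE nguv) ?(negbTE nguw).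
move=> x y /setU1P [-> /nhu //|xvw] /setU1P [->|yvw]; first by rewrite hsym nhu // setU1r.
by case/set2P: xvw => ->; case/set2P: yvw => ->; rewrite /del_edge ?girr ?eqxx ?orbT ?andbF.
Qed.

Lemma edge_stable_factor_critical_neighbour u v :
  factor_critical g -> edge_stable g -> v != u ->
  exists w, g v w /\ (g u v || g u w).
Proof.
move=> fcg [eqg eqgdel] vu.
have [Mu pMu] := fcg u; have [Mv pMv] := fcg v.
have [w gvw vwMu] := perfect_matching_except_partner pMu vu.
exists w; split=> //; apply/negPn/negP; rewrite negb_or => /andP [nguv nguw].
have sub_del : subrel (del_vertex g v) (del_edge g v w).
  by move=> x y /and3P [gxy xv yv]; rewrite /del_edge gxy (negbTE xv) (negbTE yv) andbF.
have del_irr : irreflexive (del_edge g v w) by move=> x; rewrite /del_edge girr.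
have card_g := eqg _ _ (perfect_matching_except_maximal girr (@del_vertex_sub g u) pMu)
                       (perfect_matching_except_maximal girr (@del_vertex_sub g v) pMv).
have card_del := eqgdel v w gvw _ _ (maximal_matching_del_matched_edge pMu vwMu nguv nguw)
                                     (perfect_matching_except_maximal del_irr sub_del pMv).
by move: (cardsD1 [set v; w] Mu); rewrite vwMu card_del -card_g -[X in X = _]add0n => /addIn.
Qed.

End SimpleGraph.
End Matchings.

Theorem corollary3p3 (T : finType) (g : rel T) :
  simple_graph g -> factor_critical g -> equimatchable g ->
  edge_stable g -> diam_le g 2.
Proof.
move=> [gsym girr] fcg _ esg u v.
have [<-|vu] := eqVneq v u; first by exists [::].
have [w [gvw /orP [guv|guw]]] := edge_stable_factor_critical_neighbour gsym girr fcg esg vu.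
  by exists [:: v]; rewrite /= guv.
by exists [:: w; v]; rewrite /= guw (gsym w v) gvw.
Qed.
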